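(* Let $d,n,m\geq1$ be integers, and let $\mathsf{M}_1$ be an $n$-outcome POVM and $\mathsf{M}_2$ an $m$-outcome POVM on $\mathbb{C}^d$. Define $$\bar P(\mathsf{M}_1,\mathsf{M}_2)=\frac{1}{2nm}\sum_{x=1}^n\sum_{y=1}^m\big\|\mathsf{M}_1(x)+\mathsf{M}_2(y)\big\|.$$ If $\bar P(\mathsf{M}_1,\mathsf{M}_2)>\frac12\left(1+\frac{d}{nm}\right)$, then $\mathsf{M}_1$ and $\mathsf{M}_2$ are incompatible.
   Context: $\|\cdot\|$ is the operator norm. Two POVMs $\mathsf{M}_1$ (outcomes $x$) and $\mathsf{M}_2$ (outcomes $y$) are compatible if there is a POVM $\mathsf{G}$ on the product outcome set with $\sum_y\mathsf{G}(x,y)=\mathsf{M}_1(x)$ and $\sum_x\mathsf{G}(x,y)=\mathsf{M}_2(y)$; otherwise incompatible. $\bar P(\mathsf{M}_1,\mathsf{M}_2)$ is the maximum over encodings $\{\mathcal{E}(x,y)\}$ of states of the average success probability $\frac{1}{2nm}\sum_{x,y}\mathrm{tr}[\mathcal{E}(x,y)(\mathsf{M}_1(x)+\mathsf{M}_2(y))]$. *)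

From HB Require Import structures.
From mathcomp Require Import all_boot all_order all_algebra.
From mathcomp Require Import complex.
From mathcomp Require Import classical_sets reals.
Set Implicit Arguments. Unset Strict Implicit. Unset Printing Implicit Defensive.
Import Order.TTheory GRing.Theory Num.Theory.
Local Open Scope ring_scope.
Local Open Scope complex_scope.

Definition adjmx (R : realType) (p q : nat) (A : 'M[R[i]]_(p, q)) : 'M[R[i]]_(q, p) :=
  (map_mx (fun z : R[i] => z^*) A)^T.

(* positive semidefinite: v^* A v >= 0 (in the order of R[i]: real and nonnegative) *)
Definition psd (R : realType) (d : nat) (A : 'M[R[i]]_d) : Prop :=
  forall v : 'cV[R[i]]_d, 0 <= (adjmx v *m A *m v) 0 0.

Definition POVM (R : realType) (d n : nat) (M : 'I_n -> 'M[R[i]]_d) : Prop :=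
  (forall x, psd (M x)) /\ \sum_(x < n) M x = 1%:M.

Definition vnorm2 (R : realType) (d : nat) (v : 'cV[R[i]]_d) : R :=
  \sum_(i < d) (complex.Re (v i 0) ^+ 2 + complex.Im (v i 0) ^+ 2).

Definition opnorm (R : realType) (d : nat) (A : 'M[R[i]]_d) : R :=
  reals.sup [set Num.sqrt (vnorm2 (A *m v)) | v in [set v : 'cV[R[i]]_d | vnorm2 v = 1]]%classic.

Definition compatible (R : realType) (d n m : nat)
  (M1 : 'I_n -> 'M[R[i]]_d) (M2 : 'I_m -> 'M[R[i]]_d) : Prop :=
  exists G : 'I_n -> 'I_m -> 'M[R[i]]_d,
    [/\ (forall x y, psd (G x y)),
        \sum_(x < n) \sum_(y < m) G x y = 1%:M,
        (forall x, \sum_(y < m) G x y = M1 x) &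
        (forall y, \sum_(x < n) G x y = M2 y)].

Definition Pbar (R : realType) (d n m : nat)
  (M1 : 'I_n -> 'M[R[i]]_d) (M2 : 'I_m -> 'M[R[i]]_d) : R :=
  (2 * n%:R * m%:R)^-1 * \sum_(x < n) \sum_(y < m) opnorm (M1 x + M2 y).

From HB Require Import structures.
From mathcomp Require Import all_boot all_order all_algebra.
From mathcomp Require Import complex.
From mathcomp Require Import classical_sets reals.
From mathcomp Require Import ring lra.
Import Order.TTheory GRing.Theory Num.Theory.
Local Open Scope ring_scope.
Local Open Scope complex_scope.

(* A joint POVM G gives, in the Loewner order,
     M1 x + M2 y = \sum_b G(x,b) + \sum_a G(a,y) <= \sum_(a,b) G(a,b) + G(x,y) = 1 + G(x,y),
   and a positive matrix is bounded by its trace, so ||M1 x + M2 y|| <= 1 + tr G(x,y).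
   Summing over x and y gives at most nm + tr 1 = nm + d, i.e. Pbar <= (1 + d/(nm))/2.
   Both operator bounds reduce, via Cauchy-Schwarz for the form <u, A v> of a positive A,
   to bounds on the quadratic form <u, A u>. *)

Local Notation Re := complex.Re.
Local Notation Im := complex.Im.

Lemma le_of_sqr_le_mul (R : realDomainType) (x y : R) :
  0 <= y -> x ^+ 2 <= y * x -> x <= y.
Proof. by move=> y_ge0 sqr_le; nra. Qed.

Lemma discriminant_le (R : realFieldType) (a b c : R) : 0 <= b ->
  (forall s, 0 <= a + 2 * c * s + b * s ^+ 2) -> c ^+ 2 <= a * b.
Proof.
move=> b_ge0 quad_ge0; have [b_gt0|] := ltrP 0 b.
  have := quad_ge0 (- c / b).
  have -> : a + 2 * c * (- c / b) + b * (- c / b) ^+ 2 = a - c ^+ 2 / b.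
    by field; rewrite gt_eqF.
  by rewrite subr_ge0 ler_pdivrMr.
move=> b_le0; have b0 : b = 0 by apply/le_anti; rewrite b_le0 b_ge0.
have [->|c_neq0] := eqVneq c 0; first by rewrite b0 expr0n mulr0.
have := quad_ge0 (- (a + 1) / (2 * c)).
have -> : a + 2 * c * (- (a + 1) / (2 * c)) + b * (- (a + 1) / (2 * c)) ^+ 2 = -1.
  by rewrite b0; field.
by rewrite ler0N1.
Qed.

Lemma sum_row_col_le (R : numDomainType) n m (f : 'I_n -> 'I_m -> R) x y :
  (forall a b, 0 <= f a b) ->
  \sum_(b < m) f x b + \sum_(a < n) f a y <= \sum_(a < n) \sum_(b < m) f a b + f x y.
Proof.
move=> f_ge0.
rewrite [\sum_(a < n) f a y](bigD1 x) //= [\sum_(a < n) \sum_(b < m) _](bigD1 x) //=.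
rewrite -addrA lerD2l [leRHS]addrC lerD2l.
apply: ler_sum => a _; rewrite (bigD1 y) //= lerDl.
by apply: sumr_ge0 => b _; apply: f_ge0.
Qed.

Lemma ReM {R : fieldType} (a b : R[i]) : Re (a * b) = Re a * Re b - Im a * Im b.
Proof. by case: a b => ? ? [? ?]. Qed.

Lemma ImM {R : fieldType} (a b : R[i]) : Im (a * b) = Re a * Im b + Im a * Re b.
Proof. by case: a b => ? ? [? ?]. Qed.

Lemma ReJ {R : pzRingType} (a : R[i]) : Re a^* = Re a.
Proof. by case: a. Qed.

Lemma ImJ {R : pzRingType} (a : R[i]) : Im a^* = - Im a.
Proof. by case: a. Qed.

Lemma adjmxD (R : realType) p q (A B : 'M[R[i]]_(p, q)) :
  adjmx (A + B) = adjmx A + adjmx B.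
Proof. by apply/matrixP => i j; rewrite !mxE rmorphD. Qed.

Lemma adjmxZ (R : realType) p q t (A : 'M[R[i]]_(p, q)) :
  adjmx (t *: A) = t^* *: adjmx A.
Proof. by apply/matrixP => i j; rewrite !mxE rmorphM. Qed.

Section HermitianForm.
Context {R : realType} {d : nat}.
Local Notation C := R[i].
Local Notation vec := 'cV[C]_d.
Local Notation mat := 'M[C]_d.
Implicit Types (A B : mat) (u v w : vec).

Definition hform A u v : C := (adjmx u *m A *m v) 0 0.
Definition qform A u : R := Re (hform A u u).

Lemma hformD A B u v : hform (A + B) u v = hform A u v + hform B u v.
Proof. by rewrite /hform mulmxDr mulmxDl mxE. Qed.

Lemma hform_expand A u v t : hform A (u + t *: v) (u + t *: v) =
  hform A u u + t * hform A u v + t^* * hform A v u + t^* * t * hform A v v.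
Proof.
rewrite /hform adjmxD adjmxZ !mulmxDl !mulmxDr -!scalemxAl -!scalemxAr !mxE.
ring.
Qed.

Lemma hform1 u v : hform 1%:M u v = \sum_i (u i 0)^* * v i 0.
Proof. by rewrite /hform mulmx1 mxE; apply: eq_bigr => i _; rewrite !mxE. Qed.

Lemma hform_mulmx A u v : hform A u v = hform 1%:M u (A *m v).
Proof. by rewrite /hform mulmx1 mulmxA. Qed.

Lemma hform_delta A i u : hform A (delta_mx i 0) u = (A *m u) i 0.
Proof.
rewrite hform_mulmx hform1 (bigD1 i) //= big1 ?addr0; last first.
  by move=> j /negPf ji; rewrite mxE ji /= rmorph0 mul0r.
by rewrite mxE !eqxx /= rmorph1 mul1r.
Qed.

Lemma qform_delta A i : qform A (delta_mx i 0) = Re (A i i).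
Proof.
rewrite /qform hform_delta mxE (bigD1 i) //= big1 ?addr0; last first.
  by move=> j /negPf ji; rewrite mxE ji /= mulr0.
by rewrite mxE !eqxx mulr1.
Qed.

Lemma qform1 u : qform 1%:M u = vnorm2 u.
Proof.
rewrite /qform hform1 raddf_sum; apply: eq_bigr => i _.
by rewrite [LHS]ReM ReJ ImJ mulNr opprK -!expr2.
Qed.

Lemma vnorm2_ge0 u : 0 <= vnorm2 u.
Proof. by apply: sumr_ge0 => i _; apply: addr_ge0; apply: sqr_ge0. Qed.

Lemma vnorm2_delta i : vnorm2 (delta_mx i 0 : vec) = 1.
Proof. by rewrite -qform1 qform_delta mxE eqxx. Qed.

Lemma qformD A B u : qform (A + B) u = qform A u + qform B u.
Proof. by rewrite /qform hformD raddfD. Qed.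

Lemma qform_sum n (F : 'I_n -> mat) u :
  qform (\sum_(k < n) F k) u = \sum_(k < n) qform (F k) u.
Proof.
apply: (big_morph (qform^~ u)); first by move=> A B; apply: qformD.
by rewrite /qform /hform mulmx0 mul0mx mxE.
Qed.

Lemma psd1 : psd (1%:M : mat).
Proof.
move=> v; rewrite -/(hform _ v v) hform1; apply: sumr_ge0 => i _.
by rewrite mulrC mulcJ_ge0.
Qed.

Lemma psdD A B : psd A -> psd B -> psd (A + B).
Proof.
by move=> pA pB v; rewrite -/(hform _ v v) hformD; exact: addr_ge0 (pA v) (pB v).
Qed.

Lemma psd_sum n (F : 'I_n -> mat) : (forall k, psd (F k)) -> psd (\sum_(k < n) F k).
Proof.
move=> pF; apply: (big_ind (@psd R d)) => //; last exact: psdD.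
by move=> v; rewrite /psd mulmx0 mul0mx mxE.
Qed.

Lemma psd_qform_ge0 A u : psd A -> 0 <= qform A u.
Proof. by move=> pA; have := pA u; rewrite lecE => /andP[_]. Qed.

Lemma psd_hform_real A u : psd A -> Im (hform A u u) = 0.
Proof. by move=> pA; apply: ger0_Im; apply: pA. Qed.

Lemma psd_hformC A u v : psd A -> hform A v u = (hform A u v)^*.
Proof.
move=> pA; have Im0 t := psd_hform_real A (u + t *: v) pA.
have := Im0 1; have := Im0 'i.
rewrite !hform_expand !raddfD /= !(ImM _ (hform A v v)) !psd_hform_real //.
rewrite !(ImM, ReM) /=.
case: (hform A u v) (hform A v u) => zr zi [wr wi] /= Ire Iim.
by apply/eqP; rewrite eq_complex /=; apply/andP; split; apply/eqP; lra.
Qed.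

Lemma psd_cauchy_schwarz A u v : psd A ->
  Re (hform A u v) ^+ 2 + Im (hform A u v) ^+ 2 <= qform A u * qform A v.
Proof.
move=> pA; set N := _ + _.
have N_ge0 : 0 <= N by rewrite addr_ge0 ?sqr_ge0.
apply: le_of_sqr_le_mul; first by rewrite mulr_ge0 ?psd_qform_ge0.
rewrite mulrAC -mulrA; apply: discriminant_le; first by rewrite mulr_ge0 ?psd_qform_ge0.
(* Positivity of the form along [u + s z^* v], with [z] the off-diagonal entry,
   is a real quadratic in [s] whose linear coefficient is [2 |z|^2]. *)
move=> s; have := psd_qform_ge0 A (u + (s%:C * (hform A u v)^*) *: v) pA.
rewrite /qform hform_expand (psd_hformC A u v pA) !raddfD /= !(ReM, ImM, ReJ, ImJ).
rewrite !psd_hform_real //= /N; nra.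
Qed.

Lemma psd_trace_ge0 A : psd A -> 0 <= Re (\tr A).
Proof.
move=> pA; rewrite /mxtrace raddf_sum; apply: sumr_ge0 => i _.
by have := psd_qform_ge0 A (delta_mx i 0) pA; rewrite qform_delta.
Qed.

Lemma psd_qform_le_trace A u : psd A -> qform A u <= Re (\tr A) * vnorm2 u.
Proof.
move=> pA; set q := qform A u.
have q2_le : q ^+ 2 <= vnorm2 u * vnorm2 (A *m u).
  have := psd_cauchy_schwarz 1%:M u (A *m u) psd1.
  by rewrite -hform_mulmx psd_hform_real // -/q !qform1 expr0n addr0.
have Au_le : vnorm2 (A *m u) <= Re (\tr A) * q.
  rewrite /vnorm2 /mxtrace !raddf_sum mulr_suml; apply: ler_sum => i _.
  by have := psd_cauchy_schwarz A (delta_mx i 0) u pA; rewrite hform_delta qform_delta.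
apply: le_of_sqr_le_mul; first by rewrite mulr_ge0 ?vnorm2_ge0 ?psd_trace_ge0.
by rewrite (le_trans q2_le) // [leRHS]mulrAC [leRHS]mulrC ler_wpM2l ?vnorm2_ge0.
Qed.

Lemma vnorm2_mulmx_le A c v : psd A -> (forall w, qform A w <= c * vnorm2 w) ->
  vnorm2 (A *m v) <= c ^+ 2 * vnorm2 v.
Proof.
move=> pA A_le; set N := vnorm2 (A *m v).
apply: le_of_sqr_le_mul; first by rewrite mulr_ge0 ?sqr_ge0 ?vnorm2_ge0.
have := psd_cauchy_schwarz A (A *m v) v pA.
rewrite hform_mulmx (psd_hform_real _ _ psd1) -/(qform 1%:M (A *m v)) qform1.
rewrite -/N expr0n addr0.
move/le_trans; apply.
have -> : c ^+ 2 * vnorm2 v * N = (c * N) * (c * vnorm2 v) by ring.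
by rewrite ler_pM ?psd_qform_ge0.
Qed.

Lemma opnorm_le A c : (0 < d)%N -> psd A ->
  (forall w, qform A w <= c * vnorm2 w) -> opnorm A <= c.
Proof.
move=> d_gt0 pA A_le; pose e0 : vec := delta_mx (Ordinal d_gt0) 0.
have c_ge0 : 0 <= c.
  by rewrite -[c]mulr1 -(vnorm2_delta (Ordinal d_gt0)) (le_trans _ (A_le e0))
             ?psd_qform_ge0.
apply: ge_sup.
  by exists (Num.sqrt (vnorm2 (A *m e0))); exists e0; rewrite /= ?vnorm2_delta.
move=> _ [v v1 <-]; rewrite -(ger0_norm c_ge0) -sqrtr_sqr ler_sqrt ?sqr_ge0 //.
by rewrite -[c ^+ 2]mulr1 -v1 vnorm2_mulmx_le.
Qed.

End HermitianForm.

Section JointMeasurement.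
Context {R : realType} {d n m : nat} {G : 'I_n -> 'I_m -> 'M[R[i]]_d}.
Hypotheses (G_psd : forall x y, psd (G x y))
  (G_sum1 : \sum_(x < n) \sum_(y < m) G x y = 1%:M).

Lemma opnorm_marginalsD_le x y : (0 < d)%N ->
  opnorm (\sum_(b < m) G x b + \sum_(a < n) G a y) <= 1 + Re (\tr (G x y)).
Proof.
move=> d_gt0; apply: opnorm_le => //; first by apply: psdD; apply: psd_sum.
move=> w; rewrite qformD !qform_sum.
have := @sum_row_col_le _ n m _ x y (fun a b => psd_qform_ge0 (G a b) w (G_psd a b)).
have := psd_qform_le_trace (G x y) w (G_psd x y).
have : vnorm2 w = \sum_(a < n) \sum_(b < m) qform (G a b) w.
  by rewrite -qform1 -G_sum1 qform_sum; under eq_bigr do rewrite qform_sum.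
lra.
Qed.

Lemma sum_trace_joint : \sum_(x < n) \sum_(y < m) Re (\tr (G x y)) = d%:R.
Proof.
have -> : \sum_(x < n) \sum_(y < m) Re (\tr (G x y)) = Re (\tr (\sum_x \sum_y G x y)).
  rewrite (raddf_sum (@mxtrace _ d)) [RHS]raddf_sum; apply: eq_bigr => x _.
  by rewrite (raddf_sum (@mxtrace _ d)) [RHS]raddf_sum.
by rewrite G_sum1 mxtrace1 raddfMn.
Qed.

End JointMeasurement.

Lemma compatible_Pbar_le {R : realType} {d n m : nat}
    {M1 : 'I_n -> 'M[R[i]]_d} {M2 : 'I_m -> 'M[R[i]]_d} :
  (0 < d)%N -> (0 < n)%N -> (0 < m)%N -> compatible M1 M2 ->
  Pbar M1 M2 <= 2^-1 * (1 + d%:R / (n%:R * m%:R)).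
Proof.
move=> d_gt0 n_gt0 m_gt0 [G [G_psd G_sum1 M1E M2E]].
have opnorm_sum_le :
    \sum_(x < n) \sum_(y < m) opnorm (M1 x + M2 y) <= n%:R * m%:R + d%:R.
  apply: (le_trans (y := \sum_(x < n) \sum_(y < m) (1 + Re (\tr (G x y))))).
    apply: ler_sum => x _; apply: ler_sum => y _.
    by rewrite -M1E -M2E opnorm_marginalsD_le.
  under eq_bigr do rewrite big_split /=.
  by rewrite big_split /= sum_trace_joint // !sumr_const !card_ord mulr_natl.
have nR_gt0 : 0 < n%:R :> R by rewrite ltr0n.
have mR_gt0 : 0 < m%:R :> R by rewrite ltr0n.
have -> : 2^-1 * (1 + d%:R / (n%:R * m%:R)) =
          (2 * n%:R * m%:R)^-1 * (n%:R * m%:R + d%:R) :> R.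
  by field; rewrite !gt_eqF.
by rewrite /Pbar ler_wpM2l // invr_ge0 !mulr_ge0 ?ltW.
Qed.

Theorem proposition3 (R : realType) (d n m : nat)
  (M1 : 'I_n -> 'M[R[i]]_d) (M2 : 'I_m -> 'M[R[i]]_d) :
  (1 <= d)%N -> (1 <= n)%N -> (1 <= m)%N ->
  POVM M1 -> POVM M2 ->
  Pbar M1 M2 > 2^-1 * (1 + d%:R / (n%:R * m%:R)) ->
  ~ compatible M1 M2.
Proof.
(* Compatibility alone already makes M1 and M2 POVMs. *)
move=> d_gt0 n_gt0 m_gt0 _ _ Pbar_gt /(compatible_Pbar_le d_gt0 n_gt0 m_gt0).
by rewrite leNgt Pbar_gt.
Qed.
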